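(* Let $e'>2$ be an integer and $S=\{0\}\cup(e'+\mathbb N)$. Then the conductor of $S$ is $c'=e'$, and \[ \delta^2_S(c'+e'-2)=3,\qquad \delta^2_S(c'+e'-1)=4. \]
   Context: The conductor of a numerical semigroup $S$ is the least integer $c$ with $c+\mathbb N\subseteq S$. $D_S(x)=\{s\in S:x-s\in S\}$ and $\delta^2_S(m)=\min\{|D_S(m_1)\cup D_S(m_2)|: m\le m_1<m_2,\ m_1,m_2\in S\}$. *)

From mathcomp Require Import all_boot.
Set Implicit Arguments. Unset Strict Implicit. Unset Printing Implicit Defensive.

Definition semigroup_e (e : nat) : pred nat := fun n => (n == 0) || (e <= n).

Definition is_conductor (S : pred nat) (c : nat) : Prop :=
  (forall n, c <= n -> S n) /\
  (forall c', (forall n, c' <= n -> S n) -> c <= c').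

(* D_S(x) = {s ∈ S : x - s ∈ S}; x - s is an integer, so membership forces s <= x. *)
Definition DS (S : pred nat) (x : nat) : pred nat :=
  fun s => [&& S s, s <= x & S (x - s)].

(* |D_S(m1) ∪ D_S(m2)|; all elements lie in [0, max m1 m2]. *)
Definition card_union_DS (S : pred nat) (m1 m2 : nat) : nat :=
  count (fun s => DS S m1 s || DS S m2 s) (iota 0 (maxn m1 m2).+1).

Definition is_delta2 (S : pred nat) (m k : nat) : Prop :=
  (exists m1 m2, [/\ m <= m1, m1 < m2, S m1, S m2 & card_union_DS S m1 m2 = k]) /\
  (forall m1 m2, m <= m1 -> m1 < m2 -> S m1 -> S m2 -> k <= card_union_DS S m1 m2).

From mathcomp Require Import all_boot.
From mathcomp Require Import zify.

Set Implicit Arguments.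
Unset Strict Implicit.
Unset Printing Implicit Defensive.

(* Every D_S(m) contains 0 and m, so any two elements m1 < m2 of S give at
   least three elements of D_S(m1) ∪ D_S(m2); for S = {0} ∪ (e + N) and
   m2 >= 2e the generator e lies in D_S(m2) as well, giving a fourth one.
   Both bounds are attained: D_S(2e-2) = {0, 2e-2}, D_S(2e-1) = {0, 2e-1}
   and D_S(2e) = {0, e, 2e}. *)

Lemma is_conductor_unique (S : pred nat) (c c' : nat) :
  is_conductor S c -> is_conductor S c' -> c = c'.
Proof.
by move=> [Sc minc] [Sc' minc']; apply/eqP; rewrite eqn_leq minc // minc'.
Qed.

Section DS.

Variable S : pred nat.
Hypothesis S0 : S 0.

Lemma DS_le (m s : nat) : DS S m s -> s <= m.
Proof. by case/and3P. Qed.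

Lemma DS0 (m : nat) : DS S m 0 = S m.
Proof. by rewrite /DS S0 subn0. Qed.

Lemma DSid (m : nat) : DS S m m = S m.
Proof. by rewrite /DS leqnn subnn S0 !andbT. Qed.

End DS.

Section CardUnionDS.

Variables (S : pred nat) (m1 m2 : nat).

Let D s := DS S m1 s || DS S m2 s.

Lemma card_union_DS_le (l : seq nat) :
  (forall s, D s -> s \in l) -> card_union_DS S m1 m2 <= size l.
Proof.
move=> Dl; rewrite /card_union_DS -size_filter.
apply: uniq_leq_size; first exact/filter_uniq/iota_uniq.
by move=> s; rewrite mem_filter => /andP[/Dl].
Qed.

Lemma card_union_DS_ge (l : seq nat) :
  uniq l -> all D l -> size l <= card_union_DS S m1 m2.
Proof.
move=> ul /allP Dl; rewrite /card_union_DS -size_filter.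
apply: uniq_leq_size => // s ls; have Ds := Dl s ls.
rewrite mem_filter mem_iota ltnS; apply/and3P; split=> //.
by case/orP: Ds => /DS_le le_s; rewrite (leq_trans le_s) // ?leq_maxl ?leq_maxr.
Qed.

Hypotheses (S0 : S 0) (Sm1 : S m1) (Sm2 : S m2) (lt_m12 : m1 < m2).

Lemma three_le_card_union_DS : 0 < m1 -> 3 <= card_union_DS S m1 m2.
Proof.
move=> m1_gt0; apply: (card_union_DS_ge (l := [:: 0; m1; m2])).
  by rewrite /= !inE; lia.
by rewrite /= /D !DS0 // !DSid // Sm1 Sm2 !orbT.
Qed.

Lemma four_le_card_union_DS (s : nat) :
  0 < s < m1 -> DS S m2 s -> 4 <= card_union_DS S m1 m2.
Proof.
move=> s_mid Ds; apply: (card_union_DS_ge (l := [:: 0; s; m1; m2])).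
  by rewrite /= !inE; lia.
by rewrite /= /D !DS0 // !DSid // Sm1 Sm2 Ds !orbT.
Qed.

End CardUnionDS.

Section SemigroupE.

Variable e : nat.
Hypothesis e_gt1 : 1 < e.

Local Notation S := (semigroup_e e).

Lemma semigroup_e_conductor : is_conductor S e.
Proof.
split=> [n|c Sc]; first by rewrite /semigroup_e; lia.
by have := Sc e.-1; rewrite /semigroup_e; lia.
Qed.

Lemma card_union_DS_semigroup_e_3 : card_union_DS S (e + e - 2) (e + e - 1) = 3.
Proof.
apply/eqP; rewrite eqn_leq (card_union_DS_le (l := [:: 0; e + e - 2; e + e - 1])).
  by rewrite three_le_card_union_DS //= /semigroup_e; lia.
by move=> s; rewrite /DS /semigroup_e !inE; lia.
Qed.

Lemma card_union_DS_semigroup_e_4 : card_union_DS S (e + e - 1) (e + e) = 4.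
Proof.
have De : DS S (e + e) e by rewrite /DS /semigroup_e; lia.
apply/eqP; rewrite eqn_leq (card_union_DS_le (l := [:: 0; e; e + e - 1; e + e])).
  by rewrite (four_le_card_union_DS _ _ _ _ _ De) //= /semigroup_e; lia.
by move=> s; rewrite /DS /semigroup_e !inE; lia.
Qed.

Lemma delta2_semigroup_e_3 : is_delta2 S (e + e - 2) 3.
Proof.
split.
  exists (e + e - 2), (e + e - 1); rewrite card_union_DS_semigroup_e_3.
  by split=> //; rewrite /semigroup_e; lia.
move=> m1 m2 le_m1 lt_m12 Sm1 Sm2.
by apply: three_le_card_union_DS => //; lia.
Qed.

Lemma delta2_semigroup_e_4 : is_delta2 S (e + e - 1) 4.
Proof.
split.
  exists (e + e - 1), (e + e); rewrite card_union_DS_semigroup_e_4.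
  by split=> //; rewrite /semigroup_e; lia.
move=> m1 m2 le_m1 lt_m12 Sm1 Sm2.
have De : DS S m2 e by rewrite /DS /semigroup_e; lia.
by apply: (four_le_card_union_DS _ _ _ _ _ De) => //; lia.
Qed.

End SemigroupE.

Theorem lemma4p9 (e' : nat) (he : 2 < e') :
  let S := semigroup_e e' in
  is_conductor S e' /\
  (forall c', is_conductor S c' ->
     is_delta2 S (c' + e' - 2) 3 /\ is_delta2 S (c' + e' - 1) 4).
Proof.
move=> S; have e'_gt1 : 1 < e' := ltnW he.
have condS : is_conductor S e' := semigroup_e_conductor e'_gt1.
split=> // c' /(is_conductor_unique condS) <-.
by split; [exact: delta2_semigroup_e_3 | exact: delta2_semigroup_e_4].
Qed.
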